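(* Let $H$ be a complex Hilbert space, let $P \in \mathcal{L}(H)$ be a positive operator (i.e. $\langle Px,x\rangle \ge 0$ for all $x\in H$), and let $n$ be a positive integer. Then: (i) $P$ satisfies the property $\mathcal{N}$ if and only if $P^n$ satisfies the property $\mathcal{N}$; (ii) $P$ satisfies the property $\mathcal{N}^*$ if and only if $P^n$ satisfies the property $\mathcal{N}^*$.
   Context: $\mathcal{L}(H)$ is the space of bounded linear operators on $H$. An operator $T \in \mathcal{L}(H)$ satisfies the property $\mathcal{N}$ if there exists $x_0 \in H$ with $\|x_0\|=1$ and $\|Tx_0\| = \|T\|$. With $[T] := \inf_{\|x\| = 1} \|Tx\|$, $T$ satisfies the property $\mathcal{N}^*$ if there exists $x_0 \in H$ with $\|x_0\| = 1$ and $\|Tx_0\| = [T]$. *)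

From HB Require Import structures.
From mathcomp Require Import all_boot all_order all_algebra.
From mathcomp Require Import complex.
From mathcomp Require Import boolp classical_sets reals.
Set Implicit Arguments. Unset Strict Implicit. Unset Printing Implicit Defensive.
Import Order.TTheory GRing.Theory Num.Theory.
Local Open Scope ring_scope.
Local Open Scope classical_set_scope.

Section Hilbert.
Variables (R : realType) (V : lmodType R[i]) (ip : V -> V -> R[i]).

Definition hnorm (x : V) : R := Num.sqrt (complex.Re (ip x x)).

Definition is_inner_product : Prop :=
  [/\ (forall a x y z, ip (a *: x + y) z = a * ip x z + ip y z),
      (forall x y, ip y x = (ip x y)^*),
      (forall x, 0 <= ip x x) &
      (forall x, ip x x = 0 -> x = 0)].

Definition cauchy_seq (u : nat -> V) : Prop :=
  forall e : R, 0 < e -> exists N, forall m k, (N <= m)%N -> (N <= k)%N ->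
    hnorm (u m - u k) < e.

Definition converges (u : nat -> V) : Prop :=
  exists l, forall e : R, 0 < e -> exists N, forall m, (N <= m)%N ->
    hnorm (u m - l) < e.

Definition is_hilbert : Prop :=
  is_inner_product /\ forall u, cauchy_seq u -> converges u.

Definition is_linear_op (T : V -> V) : Prop :=
  forall a x y, T (a *: x + y) = a *: T x + T y.

Definition is_bounded_op (T : V -> V) : Prop :=
  is_linear_op T /\ exists M : R, forall x, hnorm (T x) <= M * hnorm x.

Definition is_positive_op (T : V -> V) : Prop :=
  forall x, 0 <= ip (T x) x.

(* ||T|| = sup_{||x||=1} ||Tx||,  [T] = inf_{||x||=1} ||Tx|| *)
Definition op_norm (T : V -> V) : R :=
  sup [set hnorm (T x) | x in [set x | hnorm x = 1]].
Definition op_min (T : V -> V) : R :=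
  inf [set hnorm (T x) | x in [set x | hnorm x = 1]].

Definition property_N (T : V -> V) : Prop :=
  exists x0, hnorm x0 = 1 /\ hnorm (T x0) = op_norm T.
Definition property_Nstar (T : V -> V) : Prop :=
  exists x0, hnorm x0 = 1 /\ hnorm (T x0) = op_min T.

Definition op_pow (T : V -> V) (n : nat) : V -> V := iter n T.

End Hilbert.

(* Positivity makes [P] symmetric, so [|P y|^2 = <P^2 y, y>].  If [c = ||P||] or
   [c = [P]], then [A = +-(P^2 - c^2)] is a positive operator, hence
   [|A y|^2 <= B <A y, y>]; as [P^(2n) - c^(2n)] factors through [P^2 - c^2],
   every unit vector [y] satisfies
     [(|P^n y|^2 - c^(2n))^2 <= K * +-(|P y|^2 - c^2)].
   Thus [|P y| = c] forces [|P^n y| = c^n], and taking the supremum (resp.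
   infimum) over unit vectors gives [||P^n|| = ||P||^n] and [[P^n] = [P]^n].
   Conversely, [|P^n y| = c^n] together with [|P^n y| <= ||P||^(n-1) |P y|]
   (resp. [>= [P]^(n-1) |P y|], and [P^n y = 0 -> P y = 0]) gives [|P y| = c]. *)

From HB Require Import structures.
From mathcomp Require Import all_boot all_order all_algebra.
From mathcomp Require Import complex.
From mathcomp Require Import boolp classical_sets reals.
From mathcomp Require Import ring lra.
Set Implicit Arguments. Unset Strict Implicit. Unset Printing Implicit Defensive.
Import Order.TTheory GRing.Theory Num.Theory.
Local Open Scope ring_scope.

Lemma sqr_div_le0_eq0 (R : realFieldType) (d K : R) :
  0 < K -> d ^+ 2 / K <= 0 -> d = 0.
Proof.
move=> K_gt0; rewrite pmulr_lle0 ?invr_gt0 // => d_le0.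
by apply/eqP; rewrite -sqrf_eq0 eq_le d_le0 sqr_ge0.
Qed.

Lemma iter_double (T : Type) (f : T -> T) n x :
  iter n (fun z => f (f z)) x = iter n.*2 f x.
Proof. by elim: n => //= n ->. Qed.

Section InnerProductSpace.
Variables (R : realType) (V : lmodType R[i]) (ip : V -> V -> R[i]).
Hypothesis hip : is_inner_product ip.

Local Notation rdot x y := (complex.Re (ip x y)).
Local Notation "t %:C" := (real_complex R t).
Local Notation nrm := (hnorm ip).

Lemma ipDZl a x y z : ip (a *: x + y) z = a * ip x z + ip y z.
Proof. by case: hip. Qed.

Lemma ipC x y : ip y x = (ip x y)^*.
Proof. by case: hip. Qed.

Lemma ip0l z : ip 0 z = 0.
Proof.
have := ipDZl 1 0 0 z; rewrite scale1r addr0 mul1r => h.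
by apply: (addrI (ip 0 z)); rewrite addr0 -h.
Qed.

Lemma ipDl x y z : ip (x + y) z = ip x z + ip y z.
Proof. by rewrite -[x]scale1r ipDZl mul1r scale1r. Qed.

Lemma ipZl a x z : ip (a *: x) z = a * ip x z.
Proof. by rewrite -[a *: x]addr0 ipDZl ip0l addr0. Qed.

Lemma ipDr x y z : ip z (x + y) = ip z x + ip z y.
Proof. by rewrite ipC ipDl rmorphD /= -!ipC. Qed.

Lemma ipZr a x z : ip z (a *: x) = a^* * ip z x.
Proof. by rewrite ipC ipZl rmorphM /= -ipC. Qed.

Lemma rdotC x y : rdot x y = rdot y x.
Proof. by rewrite [ip y x]ipC; case: (ip x y). Qed.

Lemma rdotDl x y z : rdot (x + y) z = rdot x z + rdot y z.
Proof. by rewrite ipDl; case: (ip x z) (ip y z) => a b [c d]. Qed.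

Lemma rdotDr x y z : rdot z (x + y) = rdot z x + rdot z y.
Proof. by rewrite rdotC rdotDl !(rdotC z). Qed.

Lemma rdotZl (t : R) x z : rdot (t%:C *: x) z = t * rdot x z.
Proof. by rewrite ipZl; case: (ip x z) => a b /=; rewrite mul0r subr0. Qed.

Lemma rdotZr (t : R) x z : rdot z (t%:C *: x) = t * rdot z x.
Proof. by rewrite rdotC rdotZl rdotC. Qed.

Lemma rdotNl x z : rdot (- x) z = - rdot x z.
Proof. by rewrite -scaleN1r ipZl mulN1r; case: (ip x z). Qed.

Lemma rdotNr x z : rdot z (- x) = - rdot z x.
Proof. by rewrite rdotC rdotNl rdotC. Qed.

Lemma rdot0l z : rdot 0 z = 0.
Proof. by rewrite ip0l. Qed.

Lemma rdot0r z : rdot z 0 = 0.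
Proof. by rewrite rdotC rdot0l. Qed.

Lemma ip_real x : ip x x = (rdot x x)%:C.
Proof.
case: hip => _ _ ge0 _; rewrite [ip x x]complexE (ger0_Im (ge0 x)).
by rewrite mulr0 addr0.
Qed.

Lemma rdot_ge0 x : 0 <= rdot x x.
Proof. by case: hip => _ _ ge0 _; have := ge0 x; rewrite lecE => /andP[]. Qed.

Lemma rdot_eq0 x : rdot x x = 0 -> x = 0.
Proof. by case: hip => _ _ _ eq0 e; apply: eq0; rewrite ip_real e. Qed.

Lemma hnorm_ge0 x : 0 <= nrm x.
Proof. exact: sqrtr_ge0. Qed.

Lemma hnorm_sqr x : nrm x ^+ 2 = rdot x x.
Proof. by rewrite sqr_sqrtr // rdot_ge0. Qed.

Lemma hnorm_eq0 x : nrm x = 0 -> x = 0.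
Proof. by move=> h; apply: rdot_eq0; rewrite -hnorm_sqr h expr0n. Qed.

Lemma hnorm0 : nrm 0 = 0.
Proof. by rewrite /hnorm rdot0l sqrtr0. Qed.

Lemma hnorm1 x : nrm x = 1 -> rdot x x = 1.
Proof. by rewrite -hnorm_sqr => ->; rewrite expr1n. Qed.

Lemma hnormZ (t : R) x : nrm (t%:C *: x) = `|t| * nrm x.
Proof. by rewrite /hnorm rdotZl rdotZr mulrA -expr2 sqrtrM ?sqr_ge0 // sqrtr_sqr. Qed.

Lemma rdot_sqr_le x y : rdot x y ^+ 2 <= rdot x x * rdot y y.
Proof.
set a := rdot x x; set b := rdot x y; set c := rdot y y.
have [c0|c_neq0] := eqVneq c 0.
  by rewrite /b (rdot_eq0 c0) rdot0r c0 expr0n mulr0.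
have c_gt0 : 0 < c by rewrite lt0r c_neq0 rdot_ge0.
have := rdot_ge0 (c%:C *: x - b%:C *: y).
rewrite !(rdotDl, rdotDr, rdotNl, rdotNr, rdotZl, rdotZr) -/a -/b -/c (rdotC y x) -/b.
by nra.
Qed.

Lemma normr_rdot_le x y : `|rdot x y| <= nrm x * nrm y.
Proof.
rewrite -sqrtrM ?rdot_ge0 // -sqrtr_sqr.
exact/ler_wsqrtr/rdot_sqr_le.
Qed.

Lemma hnormD x y : nrm (x + y) <= nrm x + nrm y.
Proof.
rewrite -(ger0_norm (addr_ge0 (hnorm_ge0 x) (hnorm_ge0 y))) -sqrtr_sqr.
apply: ler_wsqrtr; rewrite sqrrD !hnorm_sqr !(rdotDl, rdotDr) (rdotC y x).
have := ler_norm (rdot x y); have := normr_rdot_le x y; lra.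
Qed.

Lemma unit_decomposition z : z <> 0 -> exists2 u, nrm u = 1 & z = (nrm z)%:C *: u.
Proof.
move=> z_neq0; have nz_gt0 : 0 < nrm z.
  by rewrite lt0r hnorm_ge0 andbT; apply/eqP => /hnorm_eq0.
exists ((nrm z)^-1%:C *: z).
  by rewrite hnormZ ger0_norm ?invr_ge0 ?hnorm_ge0 // mulVf ?gt_eqF.
by rewrite scalerA -rmorphM mulfV ?gt_eqF // rmorph1 scale1r.
Qed.

Section LinearOp.
Variable T : V -> V.
Hypothesis hT : is_linear_op T.

Lemma lin0 : T 0 = 0.
Proof.
have := hT 1 0 0; rewrite scale1r addr0 scale1r => h.
by apply: (addrI (T 0)); rewrite addr0 -h.
Qed.

Lemma linD x y : T (x + y) = T x + T y.
Proof. by have := hT 1 x y; rewrite !scale1r. Qed.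

Lemma linZ a x : T (a *: x) = a *: T x.
Proof. by rewrite -[a *: x]addr0 hT lin0 addr0. Qed.

Lemma linB x y : T (x - y) = T x - T y.
Proof. by rewrite linD -scaleN1r linZ scaleN1r. Qed.

Lemma linear_iter k : is_linear_op (iter k T).
Proof. by elim: k => [|k IH] a x y //=; rewrite IH hT. Qed.

End LinearOp.

Lemma norm_iter_le T (M : R) k z : 0 <= M ->
  (forall z, nrm (T z) <= M * nrm z) -> nrm (iter k T z) <= M ^+ k * nrm z.
Proof.
move=> M_ge0 TM; elim: k => [|k IH] /=; first by rewrite mul1r.
by apply: le_trans (TM _) _; rewrite exprS -mulrA ler_wpM2l.
Qed.

Lemma norm_iter_ge T (m : R) k z : 0 <= m ->
  (forall z, m * nrm z <= nrm (T z)) -> m ^+ k * nrm z <= nrm (iter k T z).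
Proof.
move=> m_ge0 Tm; elim: k => [|k IH] /=; first by rewrite mul1r.
by apply: le_trans _ (Tm _); rewrite exprS -mulrA ler_wpM2l.
Qed.

Lemma bounded_op_nonneg T : is_bounded_op ip T ->
  exists2 M, 0 <= M & forall z, nrm (T z) <= M * nrm z.
Proof.
case=> _ [M TM]; exists `|M| => // z.
by apply: le_trans (TM z) _; rewrite ler_wpM2r ?hnorm_ge0 ?ler_norm.
Qed.

Lemma bounded_op_iter T k : is_bounded_op ip T -> is_bounded_op ip (iter k T).
Proof.
move=> hT; split; first exact: (linear_iter (proj1 hT) k).
by have [M M_ge0 TM] := bounded_op_nonneg hT; exists (M ^+ k) => z; apply: norm_iter_le.
Qed.

Lemma bounded_op_comp T1 T2 : is_bounded_op ip T1 -> is_bounded_op ip T2 ->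
  is_bounded_op ip (fun z => T1 (T2 z)).
Proof.
move=> h1 h2; split; first by move=> a x y; rewrite (proj1 h2) (proj1 h1).
have [M1 M1_ge0 T1M] := bounded_op_nonneg h1; have [M2 _ T2M] := bounded_op_nonneg h2.
exists (M1 * M2) => z; apply: le_trans (T1M _) _.
by rewrite -mulrA ler_wpM2l ?T2M.
Qed.

Section BoundedOp.
Variables (T : V -> V) (x0 : V).
Hypotheses (hT : is_bounded_op ip T) (hx0 : nrm x0 = 1).

Let S := [set nrm (T x) | x in [set x | nrm x = 1]]%classic.

Let S_neq0 : (S !=set0)%classic.
Proof. by exists (nrm (T x0)); exists x0. Qed.

Let S_has_sup : has_sup S.
Proof.
split=> //; have [M _ TM] := bounded_op_nonneg hT.
by exists M => _ [x /= x1 <-]; have := TM x; rewrite x1 mulr1.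
Qed.

Let S_has_lbound : has_lbound S.
Proof. by exists 0 => _ [x _ <-]; apply: hnorm_ge0. Qed.

Lemma op_norm_ub z : nrm (T z) <= op_norm ip T * nrm z.
Proof.
have [->|/eqP z_neq0] := eqVneq z 0; first by rewrite lin0 ?hnorm0 ?mulr0 //; case: hT.
have [u u1 ->] := unit_decomposition z_neq0.
rewrite (linZ (proj1 hT)) !hnormZ u1 mulr1 mulrC ler_wpM2r ?normr_ge0 //.
by apply: sup_upper_bound => //; exists u.
Qed.

Lemma op_min_lb z : op_min ip T * nrm z <= nrm (T z).
Proof.
have [->|/eqP z_neq0] := eqVneq z 0; first by rewrite lin0 ?hnorm0 ?mulr0 //; case: hT.
have [u u1 ->] := unit_decomposition z_neq0.
rewrite (linZ (proj1 hT)) !hnormZ u1 mulr1 mulrC ler_wpM2l ?normr_ge0 //.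
by apply: ge_inf => //; exists u.
Qed.

Lemma op_norm_le b : (forall u, nrm u = 1 -> nrm (T u) <= b) -> op_norm ip T <= b.
Proof. by move=> Tb; apply: ge_sup => // _ [u u1 <-]; apply: Tb. Qed.

Lemma op_min_ge b : (forall u, nrm u = 1 -> b <= nrm (T u)) -> b <= op_min ip T.
Proof. by move=> Tb; apply: lb_le_inf => // _ [u u1 <-]; apply: Tb. Qed.

Lemma op_norm_ge0 : 0 <= op_norm ip T.
Proof.
by apply: le_trans (hnorm_ge0 (T x0)) _; have := op_norm_ub x0; rewrite hx0 mulr1.
Qed.

Lemma op_min_ge0 : 0 <= op_min ip T.
Proof. by apply: op_min_ge => u _; apply: hnorm_ge0. Qed.

Lemma op_norm_sqr_le b : (forall u, nrm u = 1 -> rdot (T u) (T u) <= b) ->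
  op_norm ip T ^+ 2 <= b.
Proof.
move=> Tb; have b_ge0 : 0 <= b by apply: le_trans (Tb _ hx0); apply: rdot_ge0.
rewrite -(sqr_sqrtr b_ge0) ler_sqr ?nnegrE ?op_norm_ge0 ?sqrtr_ge0 //.
by apply: op_norm_le => u u1; apply: ler_wsqrtr; apply: Tb.
Qed.

Lemma op_min_sqr_ge b : 0 <= b -> (forall u, nrm u = 1 -> b <= rdot (T u) (T u)) ->
  b <= op_min ip T ^+ 2.
Proof.
move=> b_ge0 Tb; rewrite -(sqr_sqrtr b_ge0) ler_sqr ?nnegrE ?op_min_ge0 ?sqrtr_ge0 //.
by apply: op_min_ge => u u1; apply: ler_wsqrtr; apply: Tb.
Qed.

End BoundedOp.

(* Expand [0 <= <A (y - A y / B), y - A y / B>] and bound [<A (A y), A y>] by [B |A y|^2]. *)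
Lemma positive_op_sqr_le (A : V -> V) (B : R) y : is_linear_op A -> 0 < B ->
  (forall u v, rdot (A u) v = rdot u (A v)) ->
  (forall z, 0 <= rdot (A z) z) -> (forall z, rdot (A z) z <= B * rdot z z) ->
  rdot (A y) (A y) <= B * rdot (A y) y.
Proof.
move=> hA B_gt0 A_sym A_ge0 A_le; set w := A y.
have := A_ge0 (y - B^-1%:C *: w).
rewrite (linB hA) (linZ hA) !(rdotDl, rdotDr, rdotNl, rdotNr, rdotZl, rdotZr).
rewrite [rdot (A w) y]A_sym -/w.
have BV_ge0 : 0 <= B^-1 by rewrite invr_ge0 ltW.
have Y_le : B^-1 * rdot (A w) w <= rdot w w by rewrite ler_pdivrMl ?A_le.
have := ler_wpM2l BV_ge0 Y_le => h1 h2.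
by rewrite -ler_pdivrMl //; lra.
Qed.

Lemma iter_sub_scale_le T (a : R) k : is_bounded_op ip T ->
  exists C, forall y, nrm (iter k T y - (a ^+ k)%:C *: y) <= C * nrm (T y - a%:C *: y).
Proof.
move=> hT; have [M M_ge0 TM] := bounded_op_nonneg hT.
elim: k => [|k [C hC]].
  by exists 0 => y; rewrite rmorph1 scale1r subrr hnorm0 mul0r.
exists (M * C + `|a ^+ k|) => y; set e := T y - a%:C *: y.
have -> : iter k.+1 T y - (a ^+ k.+1)%:C *: y
    = T (iter k T y - (a ^+ k)%:C *: y) + (a ^+ k)%:C *: e.
  rewrite (linB (proj1 hT)) (linZ (proj1 hT)) scalerBr scalerA -rmorphM -exprSr.
  by rewrite addrA subrK.
apply: le_trans (hnormD _ _) _; rewrite hnormZ mulrDl -mulrA lerD2r.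
by apply: le_trans (TM _) _; rewrite ler_wpM2l.
Qed.

Section PositiveOp.
Variable P : V -> V.
Hypotheses (hP : is_bounded_op ip P) (P_ge0 : is_positive_op ip P).

Local Notation hPl := (proj1 hP).

(* [<P (v + i u), v + i u>] is real and its imaginary part is [rdot (P u) v - rdot (P v) u]. *)
Lemma rdot_sym u v : rdot (P u) v = rdot u (P v).
Proof.
have Im0 z : complex.Im (ip (P z) z) = 0 by apply: ger0_Im; apply: P_ge0.
have := Im0 (v + 'i *: u).
rewrite (linD hPl) (linZ hPl) !(ipDl, ipDr, ipZl, ipZr) conjCi [ip u (P v)]ipC.
move: (Im0 v) (Im0 u); case: (ip (P v) v) (ip (P u) u) (ip (P v) u) (ip (P u) v).
by move=> ? ? [? ?] [? ?] [? ?] /= -> ->; rewrite !(mul0r, mul1r, mulN1r); lra.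
Qed.

Lemma rdot_iter_sym k u v : rdot (iter k P u) v = rdot u (iter k P v).
Proof. by elim: k u v => [|k IH] u v //=; rewrite rdot_sym IH -iterSr. Qed.

Lemma iter_eq0 k z : iter k.+1 P z = 0 -> P z = 0.
Proof.
elim: k z => [|k IH] z // Pkz; apply: rdot_eq0.
by rewrite -rdot_sym (IH (P z)) -?iterSr // rdot0l.
Qed.

(* With [s = -1, c = op_norm P] or [s = 1, c = op_min P], the operator
   [A = s (P^2 - c^2)] below is positive. *)
Section Deviation.
Variables (s c : R).
Hypotheses (s_sqr : s ^+ 2 = 1)
  (s_P_ge : forall z, 0 <= s * (rdot (P z) (P z) - c ^+ 2 * rdot z z)).

Let A z := s%:C *: (P (P z) - (c ^+ 2)%:C *: z).

Let rdotA u v : rdot (A u) v = s * (rdot (P u) (P v) - c ^+ 2 * rdot u v).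
Proof. by rewrite rdotZl rdotDl rdotNl rdotZl rdot_sym. Qed.

Let A_sym u v : rdot (A u) v = rdot u (A v).
Proof. by rewrite [RHS]rdotC !rdotA (rdotC (P u)) (rdotC u). Qed.

Let linearA : is_linear_op A.
Proof.
move=> a x y; rewrite /A !(linD hPl, linZ hPl) [_ *: (a *: x + y)]scalerDr.
by rewrite opprD addrACA scalerDr !scalerBr !scalerA; congr (_ *: _ - _ *: _ + _); ring.
Qed.

Lemma sqr_norm_P2_sub_le : exists2 B, 0 < B & forall y,
  rdot (P (P y) - (c ^+ 2)%:C *: y) (P (P y) - (c ^+ 2)%:C *: y)
    <= B * (s * (rdot (P y) (P y) - c ^+ 2 * rdot y y)).
Proof.
have [M M_ge0 PM] := bounded_op_nonneg hP.
have B_gt0 : 0 < M ^+ 2 + c ^+ 2 + 1 by rewrite ltr_wpDl ?addr_ge0 ?sqr_ge0.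
exists (M ^+ 2 + c ^+ 2 + 1) => // y.
have -> : rdot (P (P y) - (c ^+ 2)%:C *: y) (P (P y) - (c ^+ 2)%:C *: y)
    = rdot (A y) (A y).
  by rewrite rdotZl rdotZr mulrA -expr2 s_sqr mul1r.
rewrite -rdotA; apply: positive_op_sqr_le => // z; rewrite rdotA //.
have := PM z; rewrite -!hnorm_sqr; have := hnorm_ge0 (P z); have := hnorm_ge0 z.
by move: s_sqr => /eqP; rewrite sqrf_eq1 => /orP[] /eqP ->; nra.
Qed.

Lemma sqr_dev_iter_le n : exists2 K, 0 < K & forall y, nrm y = 1 ->
  (rdot (iter n P y) (iter n P y) - (c ^+ 2) ^+ n) ^+ 2
    <= K * (s * (rdot (P y) (P y) - c ^+ 2)).
Proof.
have [B B_gt0 hB] := sqr_norm_P2_sub_le.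
have [C hC] := iter_sub_scale_le (c ^+ 2) n (bounded_op_comp hP hP).
exists (C ^+ 2 * B + 1) => [|y y1]; first by rewrite ltr_wpDl // mulr_ge0 ?sqr_ge0 ?ltW.
set e := P (P y) - (c ^+ 2)%:C *: y.
set E := iter n (fun z => P (P z)) y - ((c ^+ 2) ^+ n)%:C *: y.
have -> : rdot (iter n P y) (iter n P y) - (c ^+ 2) ^+ n = rdot E y.
  rewrite rdotDl rdotNl rdotZl (hnorm1 y1) mulr1 rdot_iter_sym -iterD addnn.
  by rewrite -iter_double (rdotC y).
have E_le : `|rdot E y| <= C * nrm e.
  by apply: le_trans (normr_rdot_le E y) _; rewrite y1 mulr1; apply: hC.
have e_le := hB y; rewrite (hnorm1 y1) mulr1 -/e -(hnorm_sqr e) in e_le.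
have D_ge0 : 0 <= s * (rdot (P y) (P y) - c ^+ 2).
  by have := s_P_ge y; rewrite (hnorm1 y1) mulr1.
have r_le : `|rdot E y| ^+ 2 <= C ^+ 2 * nrm e ^+ 2.
  by rewrite -exprMn ler_sqr ?nnegrE ?normr_ge0 // (le_trans (normr_ge0 _) E_le).
rewrite -real_normK ?num_real //; apply: le_trans r_le _.
rewrite mulrDl mul1r; apply: ler_wpDr => //; rewrite -(mulrA (C ^+ 2)).
by apply: ler_wpM2l; rewrite ?sqr_ge0.
Qed.

Lemma sqr_gap_iter_le n : exists2 K, 0 < K & forall y d, nrm y = 1 -> 0 <= d ->
  d <= s * (rdot (iter n P y) (iter n P y) - (c ^+ 2) ^+ n) ->
  d ^+ 2 / K <= s * (rdot (P y) (P y) - c ^+ 2).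
Proof.
have [K K_gt0 hK] := sqr_dev_iter_le n; exists K => // y d y1 d_ge0 d_le.
rewrite ler_pdivrMr // mulrC; apply: le_trans (hK y y1).
rewrite -[X in _ <= X]mul1r -s_sqr -exprMn ler_sqr ?nnegrE //.
exact: le_trans d_le.
Qed.

Lemma norm_iter_eq n y :
  0 <= c -> nrm y = 1 -> nrm (P y) = c -> nrm (iter n P y) = c ^+ n.
Proof.
move=> c_ge0 y1 Pyc; have [K K_gt0 hK] := sqr_dev_iter_le n.
have := hK y y1; rewrite -(hnorm_sqr (P y)) Pyc subrr !mulr0 => dev_le0.
have : (rdot (iter n P y) (iter n P y) - (c ^+ 2) ^+ n) ^+ 2 == 0.
  by rewrite eq_le dev_le0 sqr_ge0.
by rewrite sqrf_eq0 subr_eq0 -hnorm_sqr exprAC eqrXn2 ?hnorm_ge0 ?exprn_ge0 // => /eqP.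
Qed.

End Deviation.

Section UnitVector.
Variable x0 : V.
Hypothesis x0_1 : nrm x0 = 1.

Local Notation M := (op_norm ip P).
Local Notation m := (op_min ip P).

Let M_ge0 : 0 <= M := op_norm_ge0 hP x0_1.
Let m_ge0 : 0 <= m := op_min_ge0 P x0_1.
Let PM z : nrm (P z) <= M * nrm z := op_norm_ub hP x0_1 z.
Let Pm z : m * nrm z <= nrm (P z) := op_min_lb hP z.

Let P_sqr_le_op_norm z : 0 <= -1 * (rdot (P z) (P z) - M ^+ 2 * rdot z z).
Proof.
rewrite mulN1r oppr_ge0 subr_le0 -!hnorm_sqr -exprMn ler_sqr ?nnegrE ?hnorm_ge0 //.
by rewrite mulr_ge0 ?hnorm_ge0.
Qed.

Let P_sqr_ge_op_min z : 0 <= 1 * (rdot (P z) (P z) - m ^+ 2 * rdot z z).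
Proof.
rewrite mul1r subr_ge0 -!hnorm_sqr -exprMn ler_sqr ?nnegrE ?hnorm_ge0 //.
by rewrite mulr_ge0 ?hnorm_ge0.
Qed.

Let sqrN1 : (-1 : R) ^+ 2 = 1. Proof. by rewrite sqrrN expr1n. Qed.

Lemma op_norm_iter n : op_norm ip (iter n P) = M ^+ n.
Proof.
set Kn := op_norm ip (iter n P).
have Kn_ge0 : 0 <= Kn := op_norm_ge0 (bounded_op_iter n hP) x0_1.
have Kn_le : Kn <= M ^+ n.
  apply: (op_norm_le x0_1) => u u1.
  by rewrite -[M ^+ n]mulr1 -u1; apply: norm_iter_le.
have [K K_gt0 gap] := sqr_gap_iter_le sqrN1 P_sqr_le_op_norm n.
set d := (M ^+ 2) ^+ n - Kn ^+ 2.
have d_ge0 : 0 <= d by rewrite subr_ge0 -exprAC ler_sqr ?nnegrE ?exprn_ge0.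
have : M ^+ 2 <= M ^+ 2 - d ^+ 2 / K.
  apply: (op_norm_sqr_le hP x0_1) => u u1.
  have q_le : rdot (iter n P u) (iter n P u) <= Kn ^+ 2.
    rewrite -hnorm_sqr ler_sqr ?nnegrE ?hnorm_ge0 //.
    by have := op_norm_ub (bounded_op_iter n hP) x0_1 u; rewrite u1 mulr1.
  have := gap u d u1 d_ge0; rewrite /d; lra.
move=> gap_le; have /(sqr_div_le0_eq0 K_gt0)/eqP : d ^+ 2 / K <= 0 by lra.
by rewrite subr_eq0 -exprAC eqrXn2 ?exprn_ge0 // => /eqP.
Qed.

Lemma op_min_iter n : op_min ip (iter n P) = m ^+ n.
Proof.
set kn := op_min ip (iter n P).
have kn_ge : m ^+ n <= kn.
  apply: (op_min_ge x0_1) => u u1.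
  by rewrite -[m ^+ n]mulr1 -u1; apply: norm_iter_ge.
have kn_ge0 : 0 <= kn := le_trans (exprn_ge0 n m_ge0) kn_ge.
have [K K_gt0 gap] := sqr_gap_iter_le (expr1n R 2) P_sqr_ge_op_min n.
set d := kn ^+ 2 - (m ^+ 2) ^+ n.
have d_ge0 : 0 <= d by rewrite subr_ge0 -exprAC ler_sqr ?nnegrE ?exprn_ge0.
have : m ^+ 2 + d ^+ 2 / K <= m ^+ 2.
  apply: (op_min_sqr_ge x0_1); first by rewrite addr_ge0 ?divr_ge0 ?sqr_ge0 ?ltW.
  move=> u u1; have q_ge : kn ^+ 2 <= rdot (iter n P u) (iter n P u).
    rewrite -hnorm_sqr ler_sqr ?nnegrE ?hnorm_ge0 //.
    by have := op_min_lb (bounded_op_iter n hP) u; rewrite u1 mulr1.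
  have := gap u d u1 d_ge0; rewrite /d; lra.
move=> gap_le; have /(sqr_div_le0_eq0 K_gt0)/eqP : d ^+ 2 / K <= 0 by lra.
by rewrite subr_eq0 -exprAC eqrXn2 ?exprn_ge0 // => /eqP.
Qed.

Lemma iter_attains_op_norm n :
  nrm (P x0) = M -> nrm (iter n P x0) = op_norm ip (iter n P).
Proof. by move=> PMx0; rewrite op_norm_iter (norm_iter_eq sqrN1 P_sqr_le_op_norm). Qed.

Lemma iter_attains_op_min n :
  nrm (P x0) = m -> nrm (iter n P x0) = op_min ip (iter n P).
Proof. by move=> Pmx0; rewrite op_min_iter (norm_iter_eq (expr1n R 2) P_sqr_ge_op_min). Qed.

Lemma attains_op_norm_of_iter n : (0 < n)%N ->
  nrm (iter n P x0) = op_norm ip (iter n P) -> nrm (P x0) = M.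
Proof.
case: n => // n _; rewrite op_norm_iter iterSr => iterMx0.
have PMx0 : nrm (P x0) <= M by have := PM x0; rewrite x0_1 mulr1.
apply/eqP; rewrite eq_le PMx0 /=; have [M0|M_gt0] := eqVneq M 0.
  by rewrite M0 hnorm_ge0.
have := norm_iter_le n (P x0) M_ge0 PM; rewrite iterMx0 exprSr.
by rewrite ler_pM2l // exprn_gt0 // lt_def M_gt0.
Qed.

Lemma attains_op_min_of_iter n : (0 < n)%N ->
  nrm (iter n P x0) = op_min ip (iter n P) -> nrm (P x0) = m.
Proof.
case: n => // n _; rewrite op_min_iter iterSr => itermx0.
have Pmx0 : m <= nrm (P x0) by have := Pm x0; rewrite x0_1 mulr1.
apply/eqP; rewrite eq_le Pmx0 andbT; have [m0|m_gt0] := eqVneq m 0.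
  rewrite m0 expr0n -iterSr in itermx0.
  by rewrite (iter_eq0 (hnorm_eq0 itermx0)) hnorm0 m0.
have := norm_iter_ge n (P x0) m_ge0 Pm; rewrite itermx0 exprSr.
by rewrite ler_pM2l // exprn_gt0 // lt_def m_gt0.
Qed.

End UnitVector.

End PositiveOp.
End InnerProductSpace.

Theorem proposition2p10 (R : realType) (V : lmodType R[i]) (ip : V -> V -> R[i])
  (hH : is_hilbert ip) (P : V -> V) (hPb : is_bounded_op ip P)
  (hPpos : is_positive_op ip P) (n : nat) (hn : (0 < n)%N) :
  (property_N ip P <-> property_N ip (op_pow P n)) /\
  (property_Nstar ip P <-> property_Nstar ip (op_pow P n)).
Proof.
have [hip _] := hH.
split; split=> -[x0 [x0_1 attains]]; exists x0; split=> //.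
- exact: iter_attains_op_norm.
- exact: attains_op_norm_of_iter hn attains.
- exact: iter_attains_op_min.
- exact: attains_op_min_of_iter hn attains.
Qed.
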